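(* Let $Y$ be a normed vector space and $A$ a nonempty closed convex subset of $Y$ such that $\operatorname{bar}(A)\neq\{0\}$ (equivalently $A\neq Y$). Then $A$ is weak-admissible at each of its points and is determined by the set $$C=\{y^*-\inf_{x\in A}y^*(x):\ y^*\in S_{Y^*}\cap(-\operatorname{bar}(A))\}.$$ Moreover, $A$ is admissible at each of its points, determined by $C$, whenever $0\notin\overline{\operatorname{conv}}^{w^*}(S_{Y^*}\cap(-\operatorname{bar}(A)))$. Consequently: (i) every closed convex set $A$ with $A\neq Y$ and $\operatorname{int}(\mathcal{R}_A)\neq\emptyset$ is admissible at each of its points, determined by $C$; (ii) in particular, every closed convex cone $A$ of $Y$ with $A\neq Y$ and $\operatorname{int}(A)\neq\emptyset$ is admissible at each of its points, determined by $S_{Y^*}\cap A^*$.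
   Context: $Y^*$ is the dual of $Y$ with the weak-star topology, $S_{Y^*}$ its unit sphere, $\overline{\operatorname{conv}}^{w^*}$ the $w^*$-closed convex hull. $\operatorname{bar}(A):=\{y^*\in Y^*:\sup_{y\in A}y^*(y)<+\infty\}$ (barrier cone); $\mathcal{R}_A:=\{v\in Y:x+\lambda v\in A\ \forall\lambda>0,\forall x\in A\}$ (recession cone); $A^*:=\{y^*\in Y^*:y^*(y)\ge0\ \forall y\in A\}$. Elements $y^*-c$ of $C$ are the functions $y\mapsto y^*(y)-c$. For a family $C$ of functions $\phi:Y\to\mathbb{R}$, $[C]^\times:=\{y:\phi(y)\ge0\ \forall\phi\in C\}$. $C$ is equi-Gateaux differentiable at $y$ if each $\phi$ is Gateaux differentiable at $y$ (differential $d_G\phi(y)\in Y^*$, defined via one-sided limits $t\searrow0$) and for each $v$, $\lim_{t\searrow0}\sup_{\phi\in C}|(\phi(y+tv)-\phi(y)-t\langle d_G\phi(y),v\rangle)/t|=0$; equi-lower semicontinuous at $y$ if for every $\varepsilon>0$ some open neighbourhood $O$ of $y$ satisfies $\phi(z)-\phi(y)>-\varepsilon$ for all $z\in O,\phi\in C$; $r$-equi-Lipschitz at $y$ if all $\phi\in C$ are $r$-Lipschitz on a common ball centered at $y$. $A$ is weak-admissible at $\hat y\in A$, determined by a nonempty family $C$, if: (a) $A=[C]^\times$; (b) $C$ is equi-Gateaux differentiable at $\hat y$; (c) $\{\phi\in C:\phi(\hat y)\ne0\}$ is empty or equi-lower semicontinuous at $\hat y$; (d) $\overline{\operatorname{conv}}^{w^*}\{d_G\phi(\hat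 y):\phi\in C\}$ is $w^*$-compact. $A$ is admissible at $\hat y\in A$, determined by a nonempty family $C$, if: (a) $A=[C]^\times$; (b) $C$ is equi-Gateaux differentiable and $r$-equi-Lipschitz at $\hat y$ for some $r\ge0$; (c) $0\notin\overline{\operatorname{conv}}^{w^*}\{d_G\phi(\hat y):\phi\in C\}$. *)

From HB Require Import structures.
From mathcomp Require Import all_boot all_order all_algebra.
From mathcomp Require Import all_classical all_reals all_analysis.
Set Implicit Arguments. Unset Strict Implicit. Unset Printing Implicit Defensive.
Import Order.TTheory GRing.Theory Num.Theory.
Import numFieldNormedType.Exports.
Local Open Scope classical_set_scope.
Local Open Scope ring_scope.

Section Defs.
Context {R : realType} {Y : normedModType R}.

(* Elements of the topological dual Y^* : continuous linear functionals,
   represented as functions Y -> R. *)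
Definition dual (f : Y -> R) : Prop :=
  [/\ forall x y : Y, f (x + y) = f x + f y,
      forall (a : R) (x : Y), f (a *: x) = a * f x
    & continuous f].

Definition dnorm (f : Y -> R) : R :=
  sup [set `|f y| | y in [set y : Y | `|y| <= 1]].

Definition dsphere : set (Y -> R) := [set f | dual f /\ dnorm f = 1].

Definition barrier (A : set Y) : set (Y -> R) :=
  [set f | dual f /\ exists M : R, forall y, A y -> f y <= M].

Definition neg_barrier (A : set Y) : set (Y -> R) :=
  [set f | barrier A (fun y => - f y)].

Definition recession (A : set Y) : set Y :=
  [set v | forall x, A x -> forall l : R, 0 < l -> A (x + l *: v)].

Definition dual_cone (A : set Y) : set (Y -> R) :=
  [set f | dual f /\ forall y, A y -> 0 <= f y].

Definition is_cone (A : set Y) : Prop :=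
  forall x, A x -> forall l : R, 0 < l -> A (l *: x).

Definition Cfam (A : set Y) : set (Y -> R) :=
  [set phi | exists f, [/\ dsphere f, neg_barrier A f &
                           phi = (fun y => f y - inf [set f x | x in A])]].

Definition pos_set (C : set (Y -> R)) : set Y :=
  [set y | forall phi, C phi -> 0 <= phi y].

Definition conv_hull (S : set (Y -> R)) : set (Y -> R) :=
  [set f | exists n (g : 'I_n -> Y -> R) (l : 'I_n -> R),
      [/\ forall i, S (g i), forall i, 0 <= l i, \sum_(i < n) l i = 1 &
          f = (fun y => \sum_(i < n) l i * g i y)]].

(* Weak-star closed convex hull (closure inside Y^* for the weak-star
   topology, i.e. the topology of pointwise convergence). *)
Definition wclconv (S : set (Y -> R)) : set (Y -> R) :=
  [set f | dual f /\ closure (conv_hull S : set {ptws Y -> R}) f].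

Definition wcompact (K : set (Y -> R)) : Prop :=
  compact (K : set {ptws Y -> R}).

Definition gateaux (phi : Y -> R) (y : Y) (d : Y -> R) : Prop :=
  dual d /\ forall v : Y,
    (fun t : R => (phi (y + t *: v) - phi y) / t) @ 0^'+ --> d v.

Definition equi_gateaux (C : set (Y -> R)) (y : Y)
    (D : (Y -> R) -> (Y -> R)) : Prop :=
  (forall phi, C phi -> gateaux phi y (D phi)) /\
  forall (v : Y) (e : R), 0 < e ->
    \forall t \near 0^'+, forall phi, C phi ->
      `|(phi (y + t *: v) - phi y - t * D phi v) / t| <= e.

Definition equi_lsc (C : set (Y -> R)) (y : Y) : Prop :=
  forall e : R, 0 < e -> \forall z \near y, forall phi, C phi ->
    - e < phi z - phi y.

Definition equi_lipschitz (C : set (Y -> R)) (y : Y) (r : R) : Prop :=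
  exists2 delta : R, 0 < delta &
    forall phi, C phi -> forall x z, ball y delta x -> ball y delta z ->
      `|phi x - phi z| <= r * `|x - z|.

Definition weak_admissible (A : set Y) (y : Y) (C : set (Y -> R)) : Prop :=
  [/\ A y, C !=set0, A = pos_set C &
    exists D, [/\ equi_gateaux C y D,
      (let C' := [set phi | C phi /\ phi y <> 0] in
         C' = set0 \/ equi_lsc C' y) &
      wcompact (wclconv (D @` C))]].

Definition admissible (A : set Y) (y : Y) (C : set (Y -> R)) : Prop :=
  [/\ A y, C !=set0, A = pos_set C &
    exists D, [/\ equi_gateaux C y D,
      (exists2 r : R, 0 <= r & equi_lipschitz C y r) &
      ~ wclconv (D @` C) (fun _ => 0)]].

End Defs.

(* Every element y^* - inf_A y^* of C is an affine function whose linear part y^*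
   lies on the unit sphere of the dual.  It is its own first-order expansion, so its
   Gateaux differential at every point is y^*, the family C is 1-Lipschitz and
   equi-lower semicontinuous, and all differentials lie in the dual unit ball, whose
   weak-star closed subsets are compact by Tychonoff's theorem (Banach-Alaoglu).
   That A = [C]^x is the Hahn-Banach separation theorem, obtained from a linear
   minorant of a sublinear functional, itself a minimal sublinear minorant given by
   Zorn's lemma.
   If v is interior to the recession cone, every y^* in -bar(A) is nonnegative on a
   ball B(v, r); on the unit sphere this gives y^*(v) >= r/2, a bound that survives
   convex combinations and weak-star limits, so 0 is not in the weak-star closed
   convex hull.  A closed convex cone lies in its own recession cone, and separating
   a point from it by a unit functional yields an element of S_{Y^*} cap A^* that is
   negative at that point. *)

From HB Require Import structures.
From mathcomp Require Import all_boot all_order all_algebra.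
From mathcomp Require Import all_classical all_reals all_analysis.
From mathcomp Require Import ring lra.
Import Order.TTheory GRing.Theory Num.Theory.
Import numFieldNormedType.Exports.
Local Open Scope classical_set_scope.
Local Open Scope ring_scope.
Set Implicit Arguments. Unset Strict Implicit. Unset Printing Implicit Defensive.

Section LinearFunctional.
Context {R : realType} {E : lmodType R} (f : E -> R) (f_lin : linear f).

Let F : {linear E -> R} := HB.pack f (GRing.isLinear.Build _ _ _ _ _ f_lin).

Lemma linearf0 : f 0 = 0. Proof. exact: (raddf0 F). Qed.
Lemma linearfN x : f (- x) = - f x. Proof. exact: (raddfN F). Qed.
Lemma linearfD x y : f (x + y) = f x + f y. Proof. exact: (raddfD F). Qed.
Lemma linearfB x y : f (x - y) = f x - f y. Proof. exact: (raddfB F). Qed.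
Lemma linearfZ a x : f (a *: x) = a * f x. Proof. exact: (linearZZ F). Qed.

End LinearFunctional.

Section Sublinear.
Context {R : realType} {E : lmodType R}.

Definition sublinear (p : E -> R) :=
  (forall x y, p (x + y) <= p x + p y) /\
  (forall (t : R) x, 0 < t -> p (t *: x) = t * p x).

Lemma sublinear0 p : sublinear p -> p 0 = 0.
Proof. by case=> _ pZ; have := pZ 2 0 (ltr0Sn _ 1); rewrite scaler0 => h; lra. Qed.

Lemma sublinearZ_ge0 p (t : R) x : sublinear p -> 0 <= t -> p (t *: x) = t * p x.
Proof.
move=> p_sub; rewrite le_eqVlt => /orP[/eqP <-|t_gt0]; last exact: p_sub.2.
by rewrite scale0r mul0r sublinear0.
Qed.

Lemma sublinearN_ge p x : sublinear p -> - p (- x) <= p x.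
Proof. by move=> p_sub; have := p_sub.1 x (- x); rewrite subrr sublinear0 // => h; lra. Qed.

Lemma sublinearW p : (forall x y, p (x + y) <= p x + p y) ->
  (forall (t : R) x, 0 < t -> p (t *: x) <= t * p x) -> sublinear p.
Proof.
move=> pD pZ; split=> // t x t_gt0; apply/eqP; rewrite eq_le pZ //=.
have := pZ t^-1 (t *: x); rewrite invr_gt0 scalerA mulVf ?gt_eqF // scale1r.
by move=> /(_ t_gt0); rewrite -(ler_pM2l t_gt0) mulrA mulfV ?gt_eqF // mul1r.
Qed.

Lemma odd_sublinear_linear p : sublinear p -> (forall x, p (- x) = - p x) -> linear p.
Proof.
move=> p_sub pN a u v; have [pD pZ] := p_sub.
have p_add x y : p (x + y) = p x + p y.
  apply/eqP; rewrite eq_le pD /=.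
  by have := pD (x + y) (- y); rewrite addrK pN => h; lra.
rewrite p_add; congr (_ + _); change (p (a *: u) = a * p u).
have [a_lt0|a_gt0|->] := ltgtP a 0; last by rewrite scale0r mul0r sublinear0.
- have := pZ (- a) u; rewrite oppr_gt0 scaleNr pN mulNr => /(_ a_lt0).
  exact: oppr_inj.
- exact: pZ.
Qed.

Section ConeInfimum.
Variables (q : E -> R) (K : set (E * R)).
Hypotheses (q_sub : sublinear q) (K00 : K (0, 0))
  (KD : forall k c k' c', K (k, c) -> K (k', c') -> K (k + k', c + c'))
  (KZ : forall (t : R) k c, 0 < t -> K (k, c) -> K (t *: k, t * c))
  (K_lbound : forall x, has_lbound [set q (x + kc.1) - kc.2 | kc in K]).

Definition cone_inf x := inf [set q (x + kc.1) - kc.2 | kc in K].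

Lemma cone_inf_le x k c : K (k, c) -> cone_inf x <= q (x + k) - c.
Proof. by move=> Kkc; apply: ge_inf; [exact: K_lbound | exists (k, c)]. Qed.

Lemma le_cone_inf x m : (forall k c, K (k, c) -> m <= q (x + k) - c) -> m <= cone_inf x.
Proof.
move=> m_lb; apply: lb_le_inf; first by exists (q (x + 0) - 0), (0, 0).
by move=> _ [[k c] /m_lb + <-].
Qed.

Lemma cone_inf_sublinear : sublinear cone_inf.
Proof.
apply: sublinearW => [x y|t x t_gt0].
  suff : cone_inf (x + y) - cone_inf y <= cone_inf x by lra.
  apply: le_cone_inf => k c Kkc.
  suff : cone_inf (x + y) - (q (x + k) - c) <= cone_inf y by lra.
  apply: le_cone_inf => k' c' Kkc'.
  have := cone_inf_le (x + y) (KD Kkc Kkc'); have := q_sub.1 (x + k) (y + k').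
  by rewrite addrACA => h1 h2; lra.
rewrite mulrC -ler_pdivrMr //; apply: le_cone_inf => k c Kkc.
rewrite ler_pdivrMr // mulrC mulrBr -q_sub.2 // scalerDr.
exact: cone_inf_le (KZ t_gt0 Kkc).
Qed.

End ConeInfimum.

Lemma minimal_sublinear_linear q : sublinear q ->
  (forall s, sublinear s -> (forall x, s x <= q x) -> forall x, q x <= s x) -> linear q.
Proof.
move=> q_sub q_min; apply: odd_sublinear_linear => // y.
(* Minimality against x |-> inf_(s >= 0) q (x + s y) - s q y forces q (- y) <= - q y. *)
pose K := [set (s *: y, s * q y) | s in [set s : R | 0 <= s]].
have K00 : K (0, 0) by exists 0; rewrite /= ?scale0r ?mul0r.
have KD k c k' c' : K (k, c) -> K (k', c') -> K (k + k', c + c').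
  move=> [s s_ge0 [<- <-]] [s' s'_ge0 [<- <-]].
  by exists (s + s'); [exact: addr_ge0 | rewrite scalerDl mulrDl].
have KZ (t : R) k c : 0 < t -> K (k, c) -> K (t *: k, t * c).
  move=> t_gt0 [s s_ge0 [<- <-]].
  by exists (t * s); [exact: mulr_ge0 (ltW t_gt0) s_ge0 | rewrite scalerA mulrA].
have K_lbound x : has_lbound [set q (x + kc.1) - kc.2 | kc in K].
  exists (- q (- x)) => _ [_ [s s_ge0 <-] <-] /=.
  have := q_sub.1 (x + s *: y) (- x).
  by rewrite addrC addKr sublinearZ_ge0 // => h; lra.
have qK_sub := cone_inf_sublinear q_sub K00 KD KZ K_lbound.
have qK_le x : cone_inf q K x <= q x.
  by have := cone_inf_le K_lbound x K00; rewrite addr0 subr0.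
have K1 : K (y, q y) by exists 1; rewrite /= ?scale1r ?mul1r.
have := le_trans (q_min _ qK_sub qK_le (- y)) (cone_inf_le K_lbound (- y) K1).
rewrite addNr sublinear0 // sub0r => qNy_le.
by apply/eqP; rewrite eq_le qNy_le /= -lerNl sublinearN_ge.
Qed.

Lemma chain_inf_sublinear (S : set (E -> R)) : S !=set0 ->
  (forall s, S s -> sublinear s) ->
  (forall s s', S s -> S s' -> (forall x, s x <= s' x) \/ (forall x, s' x <= s x)) ->
  (forall x, has_lbound [set s x | s in S]) ->
  sublinear (fun x => inf [set s x | s in S]).
Proof.
move=> [s0 Ss0] S_sub S_total S_lbound.
have S_ne x : [set s x | s in S] !=set0 by exists (s0 x), s0.
have inf_le x s : S s -> inf [set s x | s in S] <= s x.
  by move=> Ss; apply: ge_inf; [exact: S_lbound | exists s].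
apply: sublinearW => [x y|t x t_gt0].
  apply/ler_addgt0Pr => e e_gt0; have e2_gt0 : 0 < e / 2 by rewrite divr_gt0.
  have [_ [s1 Ss1 <-] s1x] := inf_adherent e2_gt0 (conj (S_ne x) (S_lbound x)).
  have [_ [s2 Ss2 <-] s2y] := inf_adherent e2_gt0 (conj (S_ne y) (S_lbound y)).
  have [s12|s21] := S_total _ _ Ss1 Ss2.
  - have := inf_le (x + y) _ Ss1; have := (S_sub _ Ss1).1 x y; have := s12 y; lra.
  - have := inf_le (x + y) _ Ss2; have := (S_sub _ Ss2).1 x y; have := s21 x; lra.
rewrite mulrC -ler_pdivrMr //; apply: lb_le_inf (S_ne x) _ => _ [s Ss <-].
by rewrite ler_pdivrMr // mulrC -(S_sub _ Ss).2 //; exact: inf_le.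
Qed.

Lemma sublinear_linear_minorant p : sublinear p ->
  exists2 f : E -> R, linear f & forall x, f x <= p x.
Proof.
move=> p_sub.
pose T := {q : E -> R | sublinear q /\ forall x, q x <= p x}.
pose ge_pw (a b : T) := `[< forall x, sval b x <= sval a x >].
have p_T : sublinear p /\ forall x, p x <= p x by [].
have [t t_max] : exists t, premaximal ge_pw t.
  apply: (ZL_preorder (exist _ p p_T)) => [a|a b c|A A_total].
  - exact/asboolP.
  - by move=> /asboolP ab /asboolP bc; apply/asboolP => x; exact: le_trans (bc x) (ab x).
  have [[a0 Aa0]|A0] := pselect (A !=set0); last first.
    by exists (exist _ p p_T) => a Aa; case: A0; exists a.
  pose S := sval @` A.
  have S_sub s : S s -> sublinear s by move=> [a _ <-]; exact: (svalP a).1.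
  have S_total s s' : S s -> S s' -> (forall x, s x <= s' x) \/ (forall x, s' x <= s x).
    move=> [a Aa <-] [b Ab <-].
    by case: (A_total _ _ Aa Ab) => /asboolP ab; [right | left].
  have S_lbound x : has_lbound [set s x | s in S].
    exists (- p (- x)) => _ [_ [a _ <-] <-]; have [a_sub a_le] := svalP a.
    by apply: le_trans (sublinearN_ge x a_sub); rewrite lerN2.
  pose m x := inf [set s x | s in S].
  have m_sub : sublinear m.
    exact: chain_inf_sublinear (ex_intro _ _ (imageP sval Aa0)) S_sub S_total S_lbound.
  have m_le x s : S s -> m x <= s x by move=> Ss; apply: ge_inf; [exact: S_lbound | exists s].
  have m_le_p x : m x <= p x := le_trans (m_le x _ (imageP sval Aa0)) ((svalP a0).2 x).
  exists (exist _ m (conj m_sub m_le_p)) => a Aa; apply/asboolP => x.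
  exact: m_le (imageP sval Aa).
exists (sval t); last exact: (svalP t).2.
apply: minimal_sublinear_linear; first exact: (svalP t).1.
move=> s s_sub s_le x.
have s_T : sublinear s /\ forall x, s x <= p x.
  by split=> // z; exact: le_trans (s_le z) ((svalP t).2 z).
have /t_max /asboolP : ge_pw t (exist _ s s_T) by exact/asboolP.
exact.
Qed.

End Sublinear.

Section DualSpace.
Context {R : realType} {Y : normedModType R}.
Implicit Types (f : Y -> R).

Lemma dualP f : dual f <-> linear f /\ continuous f.
Proof.
split=> [[fD fZ f_cont]|[f_lin f_cont]]; first by split=> // a u v; rewrite fD fZ.
by split=> //; [exact: linearfD | exact: linearfZ].
Qed.

Lemma dual_linear f : dual f -> linear f.
Proof. by move=> /dualP[]. Qed.

Lemma dual_bounded f : dual f -> exists2 M : R, 0 < M & forall y, `|f y| <= M * `|y|.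
Proof.
move=> /dualP[f_lin f_cont].
pose F : {linear Y -> R} := HB.pack f (GRing.isLinear.Build _ _ _ _ _ f_lin).
have /linear_boundedP/pinfty_ex_gt0[M M_gt0 FM] :=
  @continuous_linear_bounded _ _ _ 0 F (f_cont 0).
by exists M.
Qed.

Lemma bounded_dual f (M : R) : linear f -> (forall y, `|f y| <= M * `|y|) -> dual f.
Proof.
move=> f_lin fM; apply/dualP; split=> //.
pose F : {linear Y -> R} := HB.pack f (GRing.isLinear.Build _ _ _ _ _ f_lin).
apply: (@bounded_linear_continuous _ _ _ F); apply/linear_boundedP.
near=> r => y; apply: le_trans (fM y) (ler_wpM2r (normr_ge0 y) _).
by near: r; apply: nbhs_pinfty_ge; rewrite num_real.
Unshelve. all: by end_near.
Qed.

Lemma dualZ f (c : R) : dual f -> dual (fun y => c * f y).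
Proof.
move=> f_dual; have [M _ fM] := dual_bounded f_dual; have f_lin := dual_linear f_dual.
apply: (@bounded_dual _ (`|c| * M)).
  by move=> a u v; rewrite f_lin mulrDr mulrCA.
by move=> y; rewrite normrM -mulrA ler_wpM2l.
Qed.

Lemma dualN f : dual f -> dual (fun y => - f y).
Proof.
by move=> /(dualZ (-1)); under eq_fun do rewrite mulN1r.
Qed.

Lemma le_dnorm f z : dual f -> `|z| <= 1 -> `|f z| <= dnorm f.
Proof.
move=> f_dual z_le1; apply: ub_le_sup; last by exists z.
have [M M_gt0 fM] := dual_bounded f_dual.
exists M => _ [x /= x_le1 <-]; apply: le_trans (fM x) _.
by rewrite ler_piMr // ltW.
Qed.

Lemma ge0_dnorm f : dual f -> 0 <= dnorm f.
Proof.
move=> f_dual; have f0_le := le_dnorm (z := 0) f_dual.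
by apply: le_trans (normr_ge0 (f 0)) (f0_le _); rewrite normr0.
Qed.

Lemma dnorm_ub f : dual f -> forall y, `|f y| <= dnorm f * `|y|.
Proof.
move=> f_dual y; have f_lin := dual_linear f_dual.
have [->|y_neq0] := eqVneq y 0; first by rewrite (linearf0 f_lin) !normr0 mulr0.
have y_gt0 : 0 < `|y| by rewrite normr_gt0.
have := le_dnorm (z := `|y|^-1 *: y) f_dual.
rewrite (linearfZ f_lin) normrM normrZ normfV normr_id mulVf ?gt_eqF // => /(_ (lexx _)).
by rewrite -ler_pdivrMr // mulrC.
Qed.

Lemma dnorm0_eq0 f : dual f -> dnorm f = 0 -> f = (fun _ => 0).
Proof.
move=> f_dual f0; apply: funext => x; apply/eqP.
by rewrite -normr_le0 -(mul0r `|x|) -f0 dnorm_ub.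
Qed.

Lemma dnorm_le f (c : R) : 0 <= c -> (forall y, `|f y| <= c * `|y|) -> dnorm f <= c.
Proof.
move=> c_ge0 fc; apply: ge_sup; first by exists `|f 0|, 0 => //=; rewrite normr0.
by move=> _ [y /= y_le1 <-]; apply: le_trans (fc y) _; rewrite ler_piMr.
Qed.

Lemma dnormN f : dnorm (fun y => - f y) = dnorm f.
Proof. by rewrite /dnorm; congr sup; apply: eq_imagel => y _; rewrite normrN. Qed.

Lemma dsphere_normalize f : dual f -> dnorm f != 0 ->
  dsphere (fun y => (dnorm f)^-1 * f y).
Proof.
move=> f_dual f_neq0; have f_gt0 : 0 < dnorm f by rewrite lt_def f_neq0 ge0_dnorm.
have g_dual := dualZ (dnorm f)^-1 f_dual.
have inv_ge0 : 0 <= (dnorm f)^-1 by rewrite invr_ge0 ltW.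
split=> //; apply/eqP; rewrite eq_le; apply/andP; split.
  apply: dnorm_le => // y; rewrite normrM (ger0_norm inv_ge0).
  by rewrite mul1r ler_pdivrMl // dnorm_ub.
rewrite -(ler_pM2l f_gt0) mulr1; apply: dnorm_le; first by rewrite mulr_ge0 // ge0_dnorm.
move=> y; have := dnorm_ub g_dual y; rewrite normrM (ger0_norm inv_ge0).
by rewrite ler_pdivrMl // mulrA.
Qed.

Lemma dsphereN f : dsphere f -> dsphere (fun y => - f y).
Proof. by case=> f_dual f1; split; [exact: dualN | rewrite dnormN]. Qed.

Lemma dsphere_neq0 f : dsphere f -> f <> (fun _ => 0).
Proof.
case=> _ f1 f0; have : dnorm f <= 0 by apply: dnorm_le => // y; rewrite f0 normr0 mul0r.
by rewrite f1 ler10.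
Qed.

End DualSpace.

Section Separation.
Context {R : realType} {Y : normedModType R}.
Implicit Types (A : set Y).

Lemma normr_sublinear : sublinear (fun x : Y => `|x|).
Proof. by split=> [x y|t x t_gt0]; [exact: ler_normD | rewrite normrZ gtr0_norm]. Qed.

Lemma convex_set_comb A a b (t : R) : convex_set A -> A a -> A b -> 0 <= t -> t <= 1 ->
  A (t *: a + (1 - t) *: b).
Proof.
move=> A_convex Aa Ab t_ge0 t_le1.
by have := A_convex a b (Itv01 t_ge0 t_le1) (mem_set Aa) (mem_set Ab); rewrite inE.
Qed.

Lemma convex_conic_sum A y a a' (l l' : R) : convex_set A -> A a -> A a' ->
  0 <= l -> 0 <= l' -> 0 < l + l' ->
  exists2 b, A b & l *: (a - y) + l' *: (a' - y) = (l + l') *: (b - y).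
Proof.
move=> A_convex Aa Aa' l_ge0 l'_ge0 ll'_gt0; have ll'_neq0 := lt0r_neq0 ll'_gt0.
pose t := l / (l + l').
have lt : (l + l') * t = l by rewrite /t; field.
have l't : (l + l') * (1 - t) = l' by rewrite /t; field.
exists (t *: a + (1 - t) *: a').
  apply: convex_set_comb => //; first by rewrite divr_ge0 // ltW.
  by rewrite ler_pdivrMr // mul1r lerDl.
apply/esym; rewrite scalerBr scalerDr !scalerA lt l't.
by rewrite !scalerBr scalerDl opprD addrACA.
Qed.

Lemma convex_separation A y (r : R) : convex_set A -> A !=set0 -> 0 < r ->
  (forall a, A a -> r <= `|a - y|) ->
  exists f, [/\ linear f, forall x, `|f x| <= `|x| & forall a, A a -> f y + r <= f a].
Proof.
move=> A_convex [a0 Aa0] r_gt0 A_far.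
(* p x := inf_(l >= 0, a in A) |x + l (a - y)| - l r is sublinear, at most |x|, and at
   most -r at y - a, so a linear minorant of p separates y from A. *)
pose K := [set kc : Y * R | exists l a, [/\ 0 <= l, A a & kc = (l *: (a - y), l * r)]].
have K00 : K (0, 0) by exists 0, a0; rewrite scale0r mul0r.
have KZ (t : R) k c : 0 < t -> K (k, c) -> K (t *: k, t * c).
  move=> t_gt0 [l [a [l_ge0 Aa [-> ->]]]].
  by exists (t * l), a; split; [exact: mulr_ge0 (ltW t_gt0) l_ge0 | | rewrite scalerA mulrA].
have KD k c k' c' : K (k, c) -> K (k', c') -> K (k + k', c + c').
  move=> [l [a [l_ge0 Aa [-> ->]]]] [l' [a' [l'_ge0 Aa' [-> ->]]]].
  have [ll'_eq0|ll'_neq0] := eqVneq (l + l') 0.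
    have -> : l = 0 by lra.
    have -> : l' = 0 by lra.
    by exists 0, a0; rewrite !scale0r !mul0r !addr0.
  have ll'_gt0 : 0 < l + l' by rewrite lt_def ll'_neq0 addr_ge0.
  have [b Ab ->] := convex_conic_sum y A_convex Aa Aa' l_ge0 l'_ge0 ll'_gt0.
  by exists (l + l'), b; split=> //; [exact: addr_ge0 | rewrite mulrDl].
have K_lbound x : has_lbound [set `|x + kc.1| - kc.2 | kc in K].
  exists (- `|x|) => _ [[k c] [l [a [l_ge0 Aa [-> ->]]]] <-] /=.
  have := ler_normB (x + l *: (a - y)) x.
  rewrite addrAC subrr add0r normrZ ger0_norm // => la_le.
  have : l * r <= l * `|a - y| by rewrite ler_wpM2l // A_far.
  lra.
have p_sub := cone_inf_sublinear normr_sublinear K00 KD KZ K_lbound.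
have [f f_lin f_le] := sublinear_linear_minorant p_sub.
have f_norm x : f x <= `|x|.
  by apply: le_trans (f_le x) _; have := cone_inf_le K_lbound x K00; rewrite addr0 subr0.
exists f; split => // [x|a Aa].
  rewrite ler_norml f_norm andbT.
  by have := f_norm (- x); rewrite (linearfN f_lin) normrN lerNl.
have K1 : K (a - y, r) by exists 1, a; rewrite scale1r mul1r.
have := le_trans (f_le (y - a)) (cone_inf_le K_lbound (y - a) K1).
by rewrite -opprB addNr normr0 sub0r (linearfN f_lin) (linearfB f_lin) => h; lra.
Qed.

Lemma closed_not_mem_dist A z : closed A -> ~ A z ->
  exists2 r : R, 0 < r & forall a, A a -> r <= `|a - z|.
Proof.
move=> A_closed Az; have : ~ closure A z by move=> /A_closed.
move=> /existsNP[B /not_implyP[B_nbhs B_disj]].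
have [r /= r_gt0 rB] := (nbhs_ballP _ _).1 B_nbhs.
exists r => // a Aa; rewrite leNgt; apply/negP => a_near.
by apply: B_disj; exists a; split=> //; apply: rB; rewrite -ball_normE /= distrC.
Qed.

Lemma separation_dsphere A z : closed A -> convex_set A -> A !=set0 -> ~ A z ->
  exists2 g, dsphere g & exists2 r : R, 0 < r & forall a, A a -> g z + r <= g a.
Proof.
move=> A_closed A_convex [a0 Aa0] Az.
have [r r_gt0 A_far] := closed_not_mem_dist A_closed Az.
have [f [f_lin f_le f_sep]] := convex_separation A_convex (ex_intro _ a0 Aa0) r_gt0 A_far.
have f_dual : dual f by apply: (bounded_dual (M := 1) f_lin) => x; rewrite mul1r.
have f_gt0 : 0 < dnorm f.
  rewrite lt_def (ge0_dnorm f_dual) andbT; apply/eqP => /(dnorm0_eq0 f_dual) f0.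
  by have := f_sep _ Aa0; rewrite f0; lra.
exists (fun x => (dnorm f)^-1 * f x); first exact: dsphere_normalize f_dual (lt0r_neq0 f_gt0).
exists ((dnorm f)^-1 * r); first by rewrite mulr_gt0 // invr_gt0.
move=> a Aa; rewrite -mulrDr; apply: ler_wpM2l; [by rewrite invr_ge0 ltW | exact: f_sep].
Qed.

End Separation.

Lemma closure_preimage (T U : topologicalType) (S : set T) (phi : T -> U) (B : set U) :
  continuous phi -> closed B -> S `<=` phi @^-1` B -> closure S `<=` phi @^-1` B.
Proof.
move=> phi_cont B_closed SB x /(closureS SB).
by apply: preimage_closed => // z _; exact: phi_cont.
Qed.

Section WeakStar.
Context {R : realType} {Y : normedModType R}.
Implicit Types (S : set (Y -> R)) (f : Y -> R).

Definition dual_ball : set (Y -> R) := [set f | linear f /\ forall y, `|f y| <= `|y|].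

Lemma dual_ball_dual f : dual_ball f -> dual f.
Proof. by case=> f_lin f_le; apply: (bounded_dual (M := 1) f_lin) => y; rewrite mul1r. Qed.

Lemma eval_continuous (y : Y) : continuous (fun h : {ptws Y -> R} => h y).
Proof. exact: (@proj_continuous Y (fun _ => R) y). Qed.

Lemma closure_dual_ball S : S `<=` dual_ball -> closure (S : set {ptws Y -> R}) `<=` dual_ball.
Proof.
move=> S_ball f Sf; split=> [a u v|y].
  apply/eqP; rewrite -subr_eq0; apply/eqP.
  pose phi (h : {ptws Y -> R}) := h (a *: u + v) - (a *: h u + h v).
  have phi_cont : continuous phi.
    move=> h; apply: (@continuousB _ _ _ (fun h : {ptws Y -> R} => h (a *: u + v))
      (fun h => a *: h u + h v)); first exact: eval_continuous.
    apply: (@continuousD _ _ _ (fun h : {ptws Y -> R} => a *: h u) (fun h => h v)).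
      by apply: continuousZ; [exact: cst_continuous | exact: eval_continuous].
    exact: eval_continuous.
  have phi_S : S `<=` phi @^-1` [set 0].
    by move=> h /S_ball[h_lin _]; rewrite /phi /= h_lin subrr.
  exact: (closure_preimage phi_cont (closed_eq (y := 0)) phi_S Sf).
pose phi (h : {ptws Y -> R}) := `|h y|.
have phi_cont : continuous phi.
  by move=> h; apply: continuous_comp; [exact: eval_continuous | exact: norm_continuous].
have phi_S : S `<=` phi @^-1` [set x | x <= `|y|] by move=> h /S_ball[_ h_le]; exact: h_le.
exact: (closure_preimage phi_cont (closed_le (y := `|y|)) phi_S Sf).
Qed.

Lemma conv_hull_dual_ball S : S `<=` dual_ball -> conv_hull S `<=` dual_ball.
Proof.
move=> S_ball _ [n [g [l [Sg l_ge0 l_sum1 ->]]]]; split=> [a u v|y].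
  rewrite scaler_sumr -big_split /=; apply: eq_bigr => i _.
  by have [g_lin _] := S_ball _ (Sg i); rewrite g_lin mulrDr scalerAr.
apply: le_trans (ler_norm_sum _ _ _) _.
apply: le_trans (_ : \sum_(i < n) l i * `|y| <= _); last by rewrite -mulr_suml l_sum1 mul1r.
apply: ler_sum => i _; rewrite normrM ger0_norm // ler_wpM2l //.
by have [_ ->] := S_ball _ (Sg i).
Qed.

Lemma wclconvE S : S `<=` dual_ball -> wclconv S = closure (conv_hull S : set {ptws Y -> R}).
Proof.
move=> S_ball; apply/seteqP; split=> f; first by case.
move=> f_cl; split=> //; apply: dual_ball_dual.
exact: closure_dual_ball (conv_hull_dual_ball S_ball) _ f_cl.
Qed.

Lemma wcompact_wclconv S : S `<=` dual_ball -> wcompact (wclconv S).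
Proof.
move=> S_ball; rewrite /wcompact wclconvE //.
pose K := [set f : {ptws Y -> R} | forall y, `[- `|y|, `|y|]%classic (f y)].
have K_compact : compact K.
  apply: (@tychonoff Y (fun _ => R) (fun y => `[- `|y|, `|y|]%classic)) => y.
  exact: segment_compact.
apply: subclosed_compact K_compact _; first exact: closed_closure.
move=> f /(closure_dual_ball (conv_hull_dual_ball S_ball))[_ f_le] y /=.
by rewrite in_itv /= -ler_norml f_le.
Qed.

Lemma wclconv_ge S v (c : R) : 0 < c -> (forall f, S f -> c <= f v) ->
  ~ wclconv S (fun _ => 0).
Proof.
move=> c_gt0 S_ge [_ S0].
have conv_ge : conv_hull S `<=` (fun h : {ptws Y -> R} => h v) @^-1` [set x | c <= x].
  move=> _ [n [g [l [Sg l_ge0 l_sum1 ->]]]] /=.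
  apply: le_trans (_ : \sum_(i < n) l i * c <= _); first by rewrite -mulr_suml l_sum1 mul1r.
  by apply: ler_sum => i _; rewrite ler_wpM2l // S_ge.
have := closure_preimage (eval_continuous (y := v)) (closed_ge (y := c)) conv_ge S0.
by rewrite /= leNgt c_gt0.
Qed.

End WeakStar.

Section AffineFamily.
Context {R : realType} {Y : normedModType R}.

(* For phi = y^* - c this is y^*, the Gateaux differential of phi at every point. *)
Definition linear_part (phi : Y -> R) : Y -> R := fun x => phi x - phi 0.

Lemma dsphere_dual_ball (f : Y -> R) : dsphere f -> dual_ball f.
Proof.
case=> f_dual f1; split; first exact: dual_linear.
by move=> y; have := dnorm_ub f_dual y; rewrite f1 mul1r.
Qed.

Variable C : set (Y -> R).
Hypothesis C_affine : forall phi, C phi -> dsphere (linear_part phi).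

Lemma affine_diff phi a b : C phi -> phi a - phi b = linear_part phi (a - b).
Proof.
move=> Cphi; have [f_dual _] := C_affine Cphi.
by rewrite (linearfB (dual_linear f_dual)) /linear_part; lra.
Qed.

Lemma affine_diffZ phi y (t : R) v : C phi ->
  phi (y + t *: v) - phi y = t * linear_part phi v.
Proof.
move=> Cphi; have [f_dual _] := C_affine Cphi.
by rewrite affine_diff // addrC addKr (linearfZ (dual_linear f_dual)).
Qed.

Lemma affine_equi_gateaux y : equi_gateaux C y linear_part.
Proof.
split=> [phi Cphi|v e e_gt0]; last first.
  by near=> t => phi Cphi; rewrite affine_diffZ // subrr mul0r normr0 ltW.
have [f_dual _] := C_affine Cphi; split=> // v.
have quot_eq : {near 0^'+, (fun=> linear_part phi v) =1
    (fun t => (phi (y + t *: v) - phi y) / t)}.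
  near=> t; have t_neq0 : t != 0 by apply: lt0r_neq0; near: t; exact: nbhs_right_gt.
  by rewrite affine_diffZ // mulrC mulKf.
exact: cvg_trans (near_eq_cvg quot_eq) (cvg_cst _).
Unshelve. all: by end_near.
Qed.

Lemma affine_equi_lipschitz y : equi_lipschitz C y 1.
Proof.
exists 1 => // phi Cphi x z _ _; rewrite affine_diff // mul1r.
by have [_ ->] := dsphere_dual_ball (C_affine Cphi).
Qed.

Lemma affine_equi_lsc y : equi_lsc C y.
Proof.
move=> e e_gt0; apply/nbhs_ballP; exists e => // z; rewrite -ball_normE /= => yz phi Cphi.
have [_ phi_le] := dsphere_dual_ball (C_affine Cphi).
rewrite affine_diff //; have := phi_le (z - y); rewrite distrC in yz.
by rewrite ler_norml => /andP[phi_ge _]; lra.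
Qed.

End AffineFamily.

Lemma le0_forall_pmul (R : realFieldType) (c b : R) :
  (forall l, 0 < l -> c <= l * b) -> c <= 0.
Proof.
move=> c_le; apply/ler_addgt0Pr => e e_gt0; rewrite add0r.
have b1_gt0 : 0 < `|b| + 1 by rewrite ltr_pwDr.
apply: le_trans (c_le _ (divr_gt0 e_gt0 b1_gt0)) _.
rewrite -{2}(divfK (lt0r_neq0 b1_gt0) e); apply: ler_wpM2l; first by rewrite divr_ge0 ?ltW.
by apply: le_trans (ler_norm b) _; rewrite lerDl.
Qed.

Section BarrierRecession.
Context {R : realType} {Y : normedModType R}.
Implicit Types (A : set Y) (f g : Y -> R).

Lemma neg_barrierP A g : dual g -> (exists m, forall a, A a -> m <= g a) -> neg_barrier A g.
Proof.
move=> g_dual [m g_ge]; split; first exact: dualN.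
by exists (- m) => a /g_ge; rewrite lerN2.
Qed.

Lemma neg_barrier_recession_ge0 A f w : A !=set0 -> linear f -> neg_barrier A f ->
  recession A w -> 0 <= f w.
Proof.
move=> [a Aa] f_lin [_ [M f_ub]] w_rec; rewrite leNgt; apply/negP => fw_lt0.
have fa_ub := f_ub _ Aa.
pose l := (M + f a + 1) / (- f w).
have l_gt0 : 0 < l by rewrite divr_gt0 ?oppr_gt0 //; lra.
have := f_ub _ (w_rec _ Aa _ l_gt0); rewrite (linearfD f_lin) (linearfZ f_lin).
have -> : l * f w = - (M + f a + 1) by rewrite /l; field; rewrite lt_eqF.
lra.
Qed.

Lemma dsphere_ball_ge f v (r : R) : dsphere f -> 0 < r ->
  (forall x, ball v r x -> 0 <= f x) -> r / 2 <= f v.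
Proof.
move=> [f_dual f1] r_gt0 f_ge0; have f_lin := dual_linear f_dual.
have r2_gt0 : 0 < r / 2 by rewrite divr_gt0.
have fu_le u : `|u| <= 1 -> r / 2 * f u <= f v.
  move=> u_le1; have : ball v r (v - (r / 2) *: u).
    rewrite -ball_normE /= opprB addrC subrK normrZ gtr0_norm //.
    apply: le_lt_trans (_ : r / 2 * 1 < r); first by rewrite ler_wpM2l // ltW.
    by rewrite mulr1 ltr_pdivrMr // ltr_pMr // ltr1n.
  by move=> /f_ge0; rewrite (linearfB f_lin) (linearfZ f_lin) subr_ge0.
suff : dnorm f <= (r / 2)^-1 * f v by rewrite f1 ler_pdivlMl // mulr1.
apply: ge_sup; first by exists `|f 0|, 0 => //=; rewrite normr0.
move=> _ [u /= u_le1 <-]; rewrite ler_norml lerNl -(linearfN f_lin) !ler_pdivlMl //.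
by rewrite !fu_le ?normrN.
Qed.

Lemma convex_cone_recession A : convex_set A -> is_cone A -> A `<=` recession A.
Proof.
move=> A_convex A_cone w Aw x Ax l l_gt0.
have half_ge0 : (0 : R) <= 2^-1 by rewrite invr_ge0.
have half_le1 : (2^-1 : R) <= 1 by rewrite invf_le1 // ler1n.
have mid_A := convex_set_comb A_convex Ax (A_cone _ Aw _ l_gt0) half_ge0 half_le1.
have := A_cone _ mid_A 2 (ltr0Sn _ 1).
have -> : (1 - 2^-1 : R) = 2^-1 by field.
by rewrite scalerDr !(scalerA 2) mulfV ?pnatr_eq0 // !scale1r.
Qed.

End BarrierRecession.

Section Admissibility.
Context {R : realType} {Y : normedModType R}.
Implicit Types (A : set Y) (f : Y -> R).

Lemma linear_part_dual f : dual f -> linear_part f = f.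
Proof.
move=> f_dual; apply: funext => x.
by rewrite /linear_part (linearf0 (dual_linear f_dual)) subr0.
Qed.

Lemma Cfam_linear_part A : linear_part @` Cfam A = dsphere `&` neg_barrier A.
Proof.
have lp_shift f (c : R) : dual f -> linear_part (fun y => f y - c) = f.
  move=> f_dual; rewrite -{2}(linear_part_dual f_dual).
  by apply: funext => x; rewrite /linear_part; lra.
apply/seteqP; split=> [_ [_ [f [f_sph f_nb ->]] <-]|f [f_sph f_nb]].
  by rewrite lp_shift //; case: f_sph.
exists (fun y => f y - inf [set f x | x in A]); first by exists f.
by rewrite lp_shift //; case: f_sph.
Qed.

Lemma Cfam_affine A phi : Cfam A phi -> dsphere (linear_part phi).
Proof.
move=> C_phi; have : (linear_part @` Cfam A) (linear_part phi) by exists phi.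
by rewrite Cfam_linear_part => -[].
Qed.

Lemma Cfam_neq0 A : barrier A <> [set (fun _ => 0)] -> Cfam A !=set0.
Proof.
move=> bar_neq.
have [f [f_dual [M f_ub]] f_neq0] : exists2 f, barrier A f & f <> (fun _ => 0).
  apply: contrapT => no_f; apply: bar_neq; apply/seteqP; split=> [g g_bar|_ ->].
    by apply: contrapT => g_neq0; apply: no_f; exists g.
  split; last by exists 0.
  by apply: (bounded_dual (M := 0)) => [a u v|y]; rewrite ?scaler0 ?addr0 ?normr0 ?mul0r.
have f_norm_neq0 : dnorm f != 0 by apply/eqP => /(dnorm0_eq0 f_dual).
have g_sph := dsphereN (dsphere_normalize f_dual f_norm_neq0).
pose g y := - ((dnorm f)^-1 * f y).
exists (fun y => g y - inf [set g x | x in A]), g; split=> //.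
apply: neg_barrierP g_sph.1 _; exists (- ((dnorm f)^-1 * M)) => a Aa.
by rewrite lerN2 ler_wpM2l ?invr_ge0 ?ge0_dnorm ?f_ub.
Qed.

Lemma pos_set_Cfam A : closed A -> convex_set A -> A !=set0 -> A = pos_set (Cfam A).
Proof.
move=> A_closed A_convex A_neq0.
apply/seteqP; split=> [a Aa _ [f [_ [_ [M f_ub]] ->]]|z z_pos].
  rewrite subr_ge0; apply: ge_inf; last by exists a.
  by exists (- M) => _ [x Ax <-]; have := f_ub _ Ax; lra.
apply: contrapT => Az.
have [g g_sph [r r_gt0 g_sep]] := separation_dsphere A_closed A_convex A_neq0 Az.
have g_nb : neg_barrier A g by apply: neg_barrierP g_sph.1 _; exists (g z + r).
have : g z + r <= inf [set g x | x in A].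
  apply: lb_le_inf => [|_ [x Ax <-]]; last exact: g_sep.
  by have [a Aa] := A_neq0; exists (g a), a.
by have := z_pos _ (ex_intro _ g (And3 g_sph g_nb erefl)); lra.
Qed.

Lemma barrier_neq0 A z : closed A -> convex_set A -> A !=set0 -> ~ A z ->
  barrier A <> [set (fun _ => 0)].
Proof.
move=> A_closed A_convex A_neq0 Az bar0.
have [g g_sph [r _ g_sep]] := separation_dsphere A_closed A_convex A_neq0 Az.
have : neg_barrier A g by apply: neg_barrierP g_sph.1 _; exists (g z + r).
by rewrite /neg_barrier bar0; exact: dsphere_neq0 (dsphereN g_sph).
Qed.

Lemma Cfam_weak_admissible A y : closed A -> convex_set A ->
  barrier A <> [set (fun _ => 0)] -> A y -> weak_admissible A y (Cfam A).
Proof.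
move=> A_closed A_convex bar_neq Ay.
split=> //; [exact: Cfam_neq0 | by apply: pos_set_Cfam; last exists y|].
exists linear_part; split.
- exact: affine_equi_gateaux (@Cfam_affine A) y.
- by right; apply: affine_equi_lsc => phi [/Cfam_affine].
- by apply: wcompact_wclconv => _ [phi /Cfam_affine phi_sph <-]; exact: dsphere_dual_ball.
Qed.

Lemma Cfam_admissible A y : closed A -> convex_set A ->
  barrier A <> [set (fun _ => 0)] -> ~ wclconv (dsphere `&` neg_barrier A) (fun _ => 0) ->
  A y -> admissible A y (Cfam A).
Proof.
move=> A_closed A_convex bar_neq not_wcl0 Ay.
split=> //; [exact: Cfam_neq0 | by apply: pos_set_Cfam; last exists y|].
exists linear_part; split.
- exact: affine_equi_gateaux (@Cfam_affine A) y.
- by exists 1 => //; exact: affine_equi_lipschitz (@Cfam_affine A) y.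
- by rewrite Cfam_linear_part.
Qed.

Lemma recession_interior_admissible A : closed A -> convex_set A -> A <> setT ->
  (recession A)° !=set0 -> forall y, A y -> admissible A y (Cfam A).
Proof.
move=> A_closed A_convex A_neqT [v v_int] y Ay.
have A_neq0 : A !=set0 by exists y.
have /setTPn[z Az] : A != setT by apply/eqP.
apply: Cfam_admissible => //; first exact: barrier_neq0 A_closed A_convex A_neq0 Az.
have [d /= d_gt0 d_rec] := (nbhs_ballP _ _).1 v_int.
apply: (wclconv_ge (v := v) (c := d / 2)); first by rewrite divr_gt0.
move=> f [f_sph f_nb]; apply: dsphere_ball_ge => // x /d_rec.
exact: neg_barrier_recession_ge0 A_neq0 (dual_linear f_sph.1) f_nb.
Qed.

Lemma cone_separation A z : closed A -> convex_set A -> is_cone A -> A !=set0 -> ~ A z ->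
  exists2 g, (dsphere `&` dual_cone A) g & g z < 0.
Proof.
move=> A_closed A_convex A_cone A_neq0 Az.
have [g g_sph [r r_gt0 g_sep]] := separation_dsphere A_closed A_convex A_neq0 Az.
have g_lin := dual_linear g_sph.1.
have g_nb : neg_barrier A g by apply: neg_barrierP g_sph.1 _; exists (g z + r).
exists g.
  split=> //; split=> [|a /(convex_cone_recession A_convex A_cone)]; first exact: g_sph.1.
  exact: neg_barrier_recession_ge0 A_neq0 g_lin g_nb.
have [a Aa] := A_neq0.
suff : g z + r <= 0 by lra.
apply: (le0_forall_pmul (b := g a)) => l l_gt0.
by rewrite -(linearfZ g_lin); exact/g_sep/A_cone.
Qed.

Lemma pos_set_dsphere_dual_cone A : closed A -> convex_set A -> is_cone A -> A !=set0 ->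
  A = pos_set (dsphere `&` dual_cone A).
Proof.
move=> A_closed A_convex A_cone A_neq0.
apply/seteqP; split=> [a Aa phi [_ [_]]|z z_pos]; first exact.
apply: contrapT => Az.
have [g Cg gz_lt0] := cone_separation A_closed A_convex A_cone A_neq0 Az.
by have := z_pos g Cg; rewrite leNgt gz_lt0.
Qed.

Lemma cone_admissible A : closed A -> convex_set A -> is_cone A -> A <> setT ->
  A° !=set0 -> forall y, A y -> admissible A y (dsphere `&` dual_cone A).
Proof.
move=> A_closed A_convex A_cone A_neqT [v v_int] y Ay.
have A_neq0 : A !=set0 by exists y.
have C_lp phi : (dsphere `&` dual_cone A) phi -> linear_part phi = phi.
  by move=> [[phi_dual _] _]; exact: linear_part_dual.
have C_affine phi : (dsphere `&` dual_cone A) phi -> dsphere (linear_part phi).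
  by move=> C_phi; rewrite C_lp //; case: C_phi.
have /setTPn[z Az] : A != setT by apply/eqP.
have [g Cg _] := cone_separation A_closed A_convex A_cone A_neq0 Az.
split=> //; [by exists g | exact: pos_set_dsphere_dual_cone | exists linear_part; split].
- exact: affine_equi_gateaux C_affine y.
- by exists 1 => //; exact: affine_equi_lipschitz C_affine y.
have [d /= d_gt0 d_A] := (nbhs_ballP _ _).1 v_int.
apply: (wclconv_ge (v := v) (c := d / 2)); first by rewrite divr_gt0.
move=> _ [phi C_phi <-]; rewrite C_lp //; case: C_phi => phi_sph [_ phi_ge0].
by apply: dsphere_ball_ge => // x /d_A; exact: phi_ge0.
Qed.

End Admissibility.

Theorem theorem3p7 (R : realType) (Y : normedModType R) :
  (forall A : set Y, A !=set0 -> closed A -> convex_set A ->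
     barrier A <> [set (fun _ => 0)] ->
     (forall y, A y -> weak_admissible A y (Cfam A)) /\
     (~ wclconv (dsphere `&` neg_barrier A) (fun _ => 0) ->
        forall y, A y -> admissible A y (Cfam A)))
  /\
  (forall A : set Y, closed A -> convex_set A -> A <> setT ->
     (recession A)° !=set0 ->
     forall y, A y -> admissible A y (Cfam A))
  /\
  (forall A : set Y, closed A -> convex_set A -> is_cone A -> A <> setT ->
     A° !=set0 ->
     forall y, A y -> admissible A y (dsphere `&` dual_cone A)).
Proof.
split; first by move=> A _ A_closed A_convex bar_neq; split=> [y|not_wcl0 y];
  [exact: Cfam_weak_admissible | exact: Cfam_admissible].
split; [exact: recession_interior_admissible | exact: cone_admissible].
Qed.
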